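(* Let $\delta>0$ and let $O_2$ be an optimal solution of $I_2$ (assumed to exist). Then the optimal cost of the capacitated facility location instance $I_{cap}$ is at most $(1+2\delta)\,\mathrm{Cost}_{I_2}(O_2)$.
   Context: Let $\mathcal F^t$ be a finite set of points (facilities) in a metric space with metric $c$, $|\mathcal F^t|\ge2$, and let $n_i\ge1$ be an integer for each $i\in\mathcal F^t$ ($n_i$ clients are co-located at $i$); let $\mathcal L\ge1$ be an integer. The instance $I_2$ is the lower-bounded facility location instance with facility set $\mathcal F^t$, all opening costs $0$, the $\sum_in_i$ clients (those at $i$ located at $i$), and lower bound $\mathcal L$: a feasible solution opens a subset of $\mathcal F^t$ and assigns every client to an opened facility so that every opened facility receives at least $\mathcal L$ clients; its cost is the sum of client–facility distances. For $i\in\mathcal F^t$ let $l(i)=\min_{i'\in\mathcal F^t,i'\ne i}c(i,i')$. Call $i$ small if $n_i\le\mathcal L$ and big if $n_i>\mathcal L$. The capacitated facility location instance $I_{cap}$ is defined as follows: for small $i$ there is one facility at location $i$ with capacity $\mathcal L$ and opening cost $\delta n_il(i)$, and a demand of $\mathcal L-n_i$ units at $i$; for big $i$ there are two facilities at location $i$: $i_1$ with capacity $\mathcal L$ and opening cost $\delta\mathcal Ll(i)$, and $i_2$ with capacity $n_i-\mathcal L$ and opening cost $0$, and no demand at $i$. A feasible solution of $I_{cap}$ opens some of these facilities and assigns all demand units to opened facilities without exceeding capacities; its cost is the total opening cost plus the sum over demand units of the distance between the unit's location and its facility's location (co-located points have distance $0$). *)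

From HB Require Import structures.
From mathcomp Require Import all_boot all_order all_algebra.
Set Implicit Arguments. Unset Strict Implicit. Unset Printing Implicit Defensive.
Import Order.TTheory GRing.Theory Num.Theory.
Local Open Scope ring_scope.

Section LBFL.
Variables (R : realFieldType) (F : finType).

Definition is_metric (c : F -> F -> R) : Prop :=
  [/\ forall i j, 0 <= c i j,
      forall i j, (c i j == 0) = (i == j),
      forall i j, c i j = c j i &
      forall i j k, c i k <= c i j + c j k].

(* l(i) = min_{i' <> i} c(i,i') : c i applied to a minimizer of c i over F \ {i}
   (arg min picks such a minimizer whenever F \ {i} is nonempty). *)
Definition lmin (c : F -> F -> R) (i : F) : R :=
  c i [arg min_(j < i | j != i) c i j]%O.

Variable (n : F -> nat) (L : nat).

Definition client := {i : F & 'I_(n i)}.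
Definition client_loc (x : client) : F := tag x.

Definition I2_feasible (S : {set F}) (sigma : client -> F) : Prop :=
  (forall x, sigma x \in S) /\
  (forall j, j \in S -> (L <= #|[set x | sigma x == j]|)%N).

Definition I2_cost (c : F -> F -> R) (sigma : client -> F) : R :=
  \sum_(x : client) c (client_loc x) (sigma x).

Definition I2_optimal (c : F -> F -> R) (S : {set F}) (sigma : client -> F) : Prop :=
  I2_feasible S sigma /\
  forall S' sigma', I2_feasible S' sigma' -> I2_cost c sigma <= I2_cost c sigma'.

Definition small (i : F) : bool := (n i <= L)%N.
Definition big (i : F) : bool := (L < n i)%N.

(* facilities of I_cap: (i, false) is the facility at i for small i, and i_1
   for big i; (i, true) is i_2, which exists only for big i. *)
Definition capfac := {p : F * bool | p.2 ==> big p.1}.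
Definition capfac_loc (f : capfac) : F := (val f).1.

Definition capacity (f : capfac) : nat :=
  if (val f).2 then (n (val f).1 - L)%N else L.

Definition opencost (delta : R) (c : F -> F -> R) (f : capfac) : R :=
  let i := (val f).1 in
  if (val f).2 then 0
  else if small i then delta * (n i)%:R * lmin c i
  else delta * L%:R * lmin c i.

Definition demand (i : F) : nat := if small i then (L - n i)%N else 0%N.
Definition dunit := {i : F & 'I_(demand i)}.
Definition unit_loc (u : dunit) : F := tag u.

Definition Icap_feasible (T : {set capfac}) (tau : dunit -> capfac) : Prop :=
  (forall u, tau u \in T) /\
  (forall f, f \in T -> (#|[set u | tau u == f]| <= capacity f)%N).

Definition Icap_cost (delta : R) (c : F -> F -> R)
    (T : {set capfac}) (tau : dunit -> capfac) : R :=
  \sum_(f in T) opencost delta c f + \sum_(u : dunit) c (unit_loc u) (capfac_loc (tau u)).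

End LBFL.

From HB Require Import structures.
From mathcomp Require Import all_boot all_order all_algebra.
From mathcomp Require Import zify fingroup perm.
Import Order.TTheory GRing.Theory Num.Theory.
Set Implicit Arguments. Unset Strict Implicit. Unset Printing Implicit Defensive.

(* Only the feasibility of O_2 = (S, sigma) is used.  First sigma is
   normalized, without increasing its cost, by exchanging the facilities of
   two clients, until it has local priority: if a client located at an open
   point i is served elsewhere, then i serves only clients located at i.
   Such an i keeps at least L of its own n_i clients, so at most n_i - L
   leave it, and i is big.  Then a solution of I_cap is built: open every
   copy i_2 and the first copy of every point closed in S; the demand at a
   closed point is served on the spot; the L - n_j units at an open small
   point j are matched with distinct clients sent to j from elsewhere and
   routed to a copy at the location of their partner.  Capacities follow by
   counting; the opening costs are paid by the distances travelled by the
   clients of closed points (each at least l(i)), and each unit travels as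
   far as its partner, so the cost is at most (1 + delta) Cost(sigma). *)

Lemma card_tagged_fiber (I : finType) (m : I -> nat) (i : I) (P : nat -> bool) :
  #|[set x : {j : I & 'I_(m j)} | (tag x == i) && P (tagged x)]| =
  #|[set k : 'I_(m i) | P k]|.
Proof.
have -> : [set x : {j : I & 'I_(m j)} | (tag x == i) && P (tagged x)] =
          Tagged (fun j => 'I_(m j)) @: [set k : 'I_(m i) | P k].
  apply/setP => x; rewrite inE; apply/idP/imsetP.
    by case: x => j k /= /andP[/eqP ej Pk]; subst j; exists k; rewrite ?inE.
  by case=> k; rewrite inE => Pk ->; rewrite /= eqxx.
by apply: card_imset => k1 k2; apply: eq_from_Tagged.
Qed.

Lemma card_fiber (I : finType) (m : I -> nat) (i : I) :
  #|[set x : {j : I & 'I_(m j)} | tag x == i]| = m i.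
Proof.
rewrite -[RHS]card_ord -cardsT -(card_tagged_fiber m i xpredT).
by apply: eq_card => x; rewrite !inE andbT.
Qed.

Lemma count_iota_geq (L N : nat) : count (fun k => L <= k) (iota 0 N) = N - L.
Proof.
elim: N => [|N IH] //; rewrite -addn1 iotaD count_cat IH /= add0n addn0.
by case: leqP => h; lia.
Qed.

Lemma card_ord_geq (N L : nat) : #|[set k : 'I_N | L <= k]| = N - L.
Proof.
rewrite -(count_iota_geq L N) cardsE cardE /enum_mem size_filter.
by rewrite -val_enum_ord count_map enumT; apply: eq_count.
Qed.

Lemma card_ord_lt (N L : nat) : #|[set k : 'I_N | k < L]| <= L.
Proof.
have -> : [set k : 'I_N | k < L] = ~: [set k : 'I_N | L <= k].
  by apply/setP => k; rewrite !inE -ltnNge.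
by have := cardsC [set k : 'I_N | L <= k]; rewrite card_ord card_ord_geq; lia.
Qed.

(* An arg min is a minimizer whenever the constraint is satisfiable, even if
   the default index i0 itself does not satisfy it (as in the definition of
   l(i), whose default is i). *)
Lemma arg_min_le (d : Order.disp_t) (T : orderType d) (I : finType)
    (i0 j : I) (P : pred I) (f : I -> T) :
  P j -> (f [arg min_(i < i0 | P i) f i] <= f j)%O.
Proof.
move=> Pj; have [k Pk kmin] := arg_minP f Pj.
rewrite /Order.arg_min /extremum.
case: pickP => [i /andP[_ /forall_inP i_min] | no_min]; first exact: i_min.
have /negbT/negP[] := no_min k.
by rewrite /= Pk; apply/forall_inP => m Pm; apply: kmin.
Qed.

Local Open Scope ring_scope.

Lemma lmin_le (R : realFieldType) (F : finType) (c : F -> F -> R) (i j : F) :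
  j != i -> lmin c i <= c i j.
Proof. exact: (arg_min_le i (c i)). Qed.

Section Normalization.
Variables (R : realFieldType) (F : finType) (c : F -> F -> R) (n : F -> nat) (L : nat).
Hypothesis c_metric : is_metric c.

Local Notation client := (client n).

Definition local_priority (g : client -> F) : Prop :=
  forall x y, g x != client_loc x -> g y = client_loc x -> g y = client_loc y.

Definition misplaced (g : client -> F) : nat := #|[set x | g x != client_loc x]|.

Lemma I2_feasible_perm (S : {set F}) (g : client -> F) (t : {perm client}) :
  I2_feasible L S g -> I2_feasible L S (g \o t).
Proof.
move=> [g_open g_lb]; split=> [x|j jS]; first exact: g_open.
have -> : [set z | (g \o t) z == j] = t @^-1: [set z | g z == j].
  by apply/setP => z; rewrite !inE.
by rewrite card_preimset; [apply: g_lb | apply: perm_inj].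
Qed.

(* If y is served at the location of x, letting x and y exchange their
   facilities does not increase the cost (triangle inequality). *)
Lemma swap_cost (g : client -> F) (x y : client) :
  x != y -> g y = client_loc x ->
  I2_cost c (g \o tperm x y) <= I2_cost c g.
Proof.
case: c_metric => _ c_zero _ c_tri xy gy.
have yx : y != x by rewrite eq_sym.
rewrite /I2_cost [leLHS](bigD1 x) // [leRHS](bigD1 x) //=.
rewrite [in leLHS](bigD1 y) // [in leRHS](bigD1 y) //= !addrA.
rewrite tpermL tpermR gy.
have -> : \sum_(z | (z != x) && (z != y)) c (client_loc z) (g (tperm x y z)) =
          \sum_(z | (z != x) && (z != y)) c (client_loc z) (g z).
  by apply: eq_bigr => z /andP[zx zy]; rewrite tpermD // eq_sym.
have c_xx : c (client_loc x) (client_loc x) = 0 by apply/eqP; rewrite c_zero.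
by rewrite lerD2r c_xx add0r addrC c_tri.
Qed.

Lemma swap_misplaced (g : client -> F) (x y : client) :
  g x != client_loc x -> g y = client_loc x -> g y != client_loc y ->
  (misplaced (g \o tperm x y) < misplaced g)%N.
Proof.
move=> gx gy gy'.
have xy : x != y by apply: contraNneq gx => exy; subst y; rewrite gy.
apply: proper_card; apply/properP; split.
  apply/subsetP => z; rewrite !inE /=.
  by case: (tpermP x y z) => [->|->|] //; rewrite gy eqxx.
by exists x; rewrite !inE //= tpermL gy eqxx.
Qed.

(* Normalization: by strong induction on the number of misplaced clients,
   exchanging a violating pair as long as local priority fails. *)
Lemma normalize (S : {set F}) (s : client -> F) :
  I2_feasible L S s ->
  exists g, [/\ I2_feasible L S g, I2_cost c g <= I2_cost c s & local_priority g].
Proof.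
move: {2}(misplaced s) (erefl (misplaced s)) => k; elim/ltn_ind: k s.
move=> k IH s ks fs.
pose violation x y := [&& s x != client_loc x, s y == client_loc x & s y != client_loc y].
case: (boolP [exists x, exists y, violation x y]) =>
    [/existsP[x /existsP[y /and3P[sx /eqP sy sy']]] | none].
  have xy : x != y by apply: contraNneq sx => exy; subst y; rewrite sy.
  have lt_k : (misplaced (s \o tperm x y) < k)%N by rewrite -ks swap_misplaced.
  have [g [fg cg pg]] := IH _ lt_k _ erefl (I2_feasible_perm (tperm x y) fs).
  by exists g; split => //; apply: le_trans cg (swap_cost xy sy).
exists s; split => // x y sx sy; apply/eqP; apply: contraT => sy'.
move: none; rewrite negb_exists => /forallP/(_ x).
by rewrite negb_exists => /forallP/(_ y); rewrite /violation sx sy' sy eqxx.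
Qed.

End Normalization.

Section Construction.
Variables (F : finType) (n : F -> nat) (L : nat).
Hypothesis n_pos : forall i, (1 <= n i)%N.
Variables (S : {set F}) (g : client n -> F).
Hypothesis g_lb : forall j, j \in S -> (L <= #|[set x | g x == j]|)%N.
Hypothesis g_prio : local_priority g.

Local Notation client := (client n).
Local Notation dunit := (dunit n L).
Local Notation capfac := (capfac n L).

Lemma card_clients_at (i : F) : #|[set x : client | client_loc x == i]| = n i.
Proof. exact: card_fiber. Qed.

Lemma card_units_at (i : F) : #|[set u : dunit | unit_loc u == i]| = demand n L i.
Proof. exact: card_fiber. Qed.

Definition incoming (j : F) : {set client} := [set x | (g x == j) && (client_loc x != j)].
Definition outgoing (i : F) : {set client} := [set x | (client_loc x == i) && (g x != i)].

(* An open facility j receives at least L clients, at most n_j of which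
   are its own. *)
Lemma incoming_ge (j : F) : j \in S -> (L - n j <= #|incoming j|)%N.
Proof.
move=> jS; have := g_lb jS.
have sub : [set x | g x == j] \subset [set x : client | client_loc x == j] :|: incoming j.
  by apply/subsetP => x; rewrite !inE => /eqP ->; rewrite eqxx /=; case: eqP.
have := leq_trans (subset_leq_card sub) (leq_card_setU _ _).1.
by rewrite card_clients_at leq_subLR => h1 h2; apply: leq_trans h2 h1.
Qed.

(* By local priority, if some client leaves an open facility i, then the at
   least L clients served at i are all located at i. *)
Lemma outgoing_le (i : F) : i \in S -> (#|outgoing i| <= n i - L)%N.
Proof.
move=> iS; have [->|[x]] := set_0Vmem (outgoing i); first by rewrite cards0.
rewrite inE => /andP[/eqP lx gx].
have stay : [set y | g y == i] \subset [set y : client | client_loc y == i] :\: outgoing i.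
  apply/subsetP => y; rewrite !inE => /eqP gy; rewrite gy eqxx andbF /=.
  by rewrite -gy -(g_prio (x := x)) ?lx // gx.
have := leq_trans (g_lb iS) (subset_leq_card stay).
have := cardsID (outgoing i) [set y : client | client_loc y == i].
have -> : [set y : client | client_loc y == i] :&: outgoing i = outgoing i.
  by apply/setIidPr/subsetP => y; rewrite !inE => /andP[].
by rewrite card_clients_at => <- h; rewrite -addnBA // leq_addr.
Qed.

Lemma sender_big (x : client) :
  g x != client_loc x -> client_loc x \in S -> big n L (client_loc x).
Proof.
move=> gx xS; have := outgoing_le xS.
have : (0 < #|outgoing (client_loc x)|)%N by apply/card_gt0P; exists x; rewrite inE eqxx gx.
by rewrite /big; lia.
Qed.

(* The k-th demand unit at j is matched with the k-th incoming client of j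
   (the default, some client located at j, is never used for open j). *)
Definition partner (u : dunit) : client :=
  nth (Tagged (fun i => 'I_(n i)) (Ordinal (n_pos (unit_loc u))))
      (enum (incoming (unit_loc u))) (tagged u).

(* For open j, demand(j) <= L - n_j <= #|incoming j|, so partners exist. *)
Lemma partner_index (u : dunit) :
  unit_loc u \in S -> (tagged u < size (enum (incoming (unit_loc u))))%N.
Proof.
case: u => j k /= jS; rewrite -cardE; apply: leq_trans (incoming_ge jS).
by apply: leq_trans (ltn_ord k) _; rewrite /demand; case: ifP.
Qed.

Lemma partner_incoming (u : dunit) :
  unit_loc u \in S -> partner u \in incoming (unit_loc u).
Proof. by move/partner_index; rewrite -mem_enum; apply: mem_nth. Qed.

Lemma partner_served (u : dunit) : unit_loc u \in S -> g (partner u) = unit_loc u.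
Proof. by move/partner_incoming; rewrite inE => /andP[/eqP]. Qed.

Lemma partner_inj : {in [set u | unit_loc u \in S] &, injective partner}.
Proof.
move=> u1 u2; rewrite !inE => S1 S2 E.
have e : unit_loc u1 = unit_loc u2 by rewrite -(partner_served S1) -(partner_served S2) E.
move: (partner_index S1) (partner_index S2) E.
case: u1 u2 e {S1 S2} => [j k1] [j' k2] /= e; subst j' => i1 i2.
rewrite /partner /= => /eqP; rewrite nth_uniq ?enum_uniq // => /eqP k12.
by congr existT; apply: val_inj.
Qed.

(* A client x is routed to the second copy at its location when that
   location is big and either open in S (then at most n_i - L clients leave
   it) or x is one of the last n_i - L clients located there. *)
Definition second_copy (x : client) : bool :=
  big n L (client_loc x) && ((client_loc x \in S) || (L <= tagged x)%N).

Lemma second_copy_big (x : client) : second_copy x ==> big n L (client_loc x).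
Proof. by apply/implyP => /andP[]. Qed.

Definition client_fac (x : client) : capfac :=
  exist _ (client_loc x, second_copy x) (second_copy_big x).

Definition first_fac (i : F) : capfac := exist _ (i, false) isT.

Definition cap_open : {set capfac} := [set f | (val f).2 || ((val f).1 \notin S)].

Definition cap_assign (u : dunit) : capfac :=
  if unit_loc u \in S then client_fac (partner u) else first_fac (unit_loc u).

(* Units are only sent to opened facilities: a partner located at an open
   point of S has left it, so that point is big and its flag is set. *)
Lemma cap_assign_open (u : dunit) : cap_assign u \in cap_open.
Proof.
rewrite /cap_assign inE; case: ifP => uS /=; last by rewrite uS.
move: (partner_incoming uS); rewrite inE => /andP[/eqP served away].
case: (boolP (client_loc (partner u) \in S)) => xS; last by rewrite orbT.
have left_home : g (partner u) != client_loc (partner u) by rewrite served eq_sym.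
by rewrite /second_copy xS (sender_big left_home xS).
Qed.

Definition routed (i : F) (b : bool) : {set client} :=
  [set x in outgoing i | second_copy x == b].

(* The units served by facility (i, b) are the units at i if b = false,
   plus units whose (distinct) partners are routed to (i, b). *)
Lemma load_le (f : capfac) :
  (#|[set u | cap_assign u == f]| <=
   (if (val f).2 then 0 else demand n L (val f).1) + #|routed (val f).1 (val f).2|)%N.
Proof.
case: f => [[i b] hb] /=; set f : capfac := exist _ (i, b) hb.
pose at_home := [set u : dunit | (unit_loc u == i) && ~~ b].
pose matched := [set u : dunit | (unit_loc u \in S) && (client_fac (partner u) == f)].
have load_split : [set u | cap_assign u == f] \subset at_home :|: matched.
  apply/subsetP => u; rewrite !inE /cap_assign; case: ifP => _ /=.
    by move=> ->; rewrite orbT.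
  by rewrite -val_eqE /= xpair_eqE => /andP[-> /eqP <-].
have home_le : (#|at_home| <= if b then 0 else demand n L i)%N.
  rewrite /at_home; case: (b).
    by rewrite leqn0 cards_eq0; apply/eqP/setP => u; rewrite !inE andbF.
  by rewrite -card_units_at; apply: subset_leq_card; apply/subsetP => u; rewrite !inE andbT.
have matched_le : (#|matched| <= #|routed i b|)%N.
  rewrite -(card_in_imset (f := partner)); last first.
    by move=> u1 u2; rewrite !inE => /andP[S1 _] /andP[S2 _]; apply: partner_inj; rewrite inE.
  apply: subset_leq_card; apply/subsetP => x /imsetP[u]; rewrite inE => /andP[uS /eqP fu] ->.
  move: (partner_incoming uS); rewrite !inE => /andP[/eqP served away].
  move: fu => /(congr1 val) /= [loc_i flag_b].
  by rewrite -loc_i eqxx served eq_sym away flag_b eqxx.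
apply: leq_trans (subset_leq_card load_split) _.
exact: leq_trans (leq_card_setU _ _).1 (leq_add home_le matched_le).
Qed.

(* Second copies: at an open point only the n_i - L leaving clients, at a
   closed point only the last n_i - L clients, are routed there. *)
Lemma second_copy_load (i : F) : (#|routed i true| <= n i - L)%N.
Proof.
case: (boolP (i \in S)) => iS.
  apply: leq_trans (outgoing_le iS); apply: subset_leq_card.
  by apply/subsetP => x; rewrite inE => /andP[].
rewrite -(card_ord_geq (n i) L) -(card_tagged_fiber n i (fun k => L <= k)%N).
apply: subset_leq_card; apply/subsetP => x; rewrite !inE /second_copy.
case/andP=> /andP[/eqP xi _]; rewrite eqb_id xi (negbTE iS) => /andP[_ Lx].
by apply/andP; split; [apply/eqP | exact: Lx].
Qed.

(* First copy at a closed point i: a small i serves its L - n_i own units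
   and at most n_i partners; a big i has no demand and at most L partners,
   the first L clients located at i. *)
Lemma first_copy_load (i : F) :
  i \notin S -> (demand n L i + #|routed i false| <= L)%N.
Proof.
move=> iS; rewrite /demand /small; case: (leqP (n i) L) => [small_i | big_i].
  have : (#|routed i false| <= n i)%N.
    rewrite -card_clients_at; apply: subset_leq_card; apply/subsetP => x.
    by rewrite !inE => /andP[/andP[-> _] _].
  by move=> h; rewrite -{2}(subnK small_i) leq_add2l.
rewrite add0n; apply: leq_trans (card_ord_lt (n i) L).
rewrite -(card_tagged_fiber n i (fun k => k < L)%N).
apply: subset_leq_card; apply/subsetP => x; rewrite !inE /second_copy.
case/andP=> /andP[/eqP xi _]; rewrite xi (negbTE iS) /big big_i /= ltnNge.
by move=> /eqP/negbT Lx; apply/andP; split; [apply/eqP | exact: Lx].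
Qed.

Lemma cap_assign_capacity (f : capfac) :
  f \in cap_open -> (#|[set u | cap_assign u == f]| <= capacity f)%N.
Proof.
move=> fT; apply: leq_trans (load_le f) _; rewrite /capacity.
case: f fT => [[i []] hb]; rewrite inE /= => fT.
  by rewrite add0n second_copy_load.
exact: first_copy_load.
Qed.

Variables (R : realFieldType) (c : F -> F -> R) (delta : R).
Hypothesis delta_ge0 : 0 <= delta.
Hypothesis c_metric : is_metric c.
Hypothesis g_open : forall x, g x \in S.

Definition travel (x : client) : R := c (client_loc x) (g x).

Definition at_first (f : capfac) (x : client) : bool :=
  (client_loc x == (val f).1) && ~~ (val f).2.

(* The first copy at a closed point i costs at most delta times the
   distance travelled by the clients at i, since each of them is served
   at another point and hence travels at least l(i). *)
Lemma opencost_le (f : capfac) :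
  f \in cap_open -> opencost delta c f <= delta * \sum_(x | at_first f x) travel x.
Proof.
case: c_metric => c_ge0 _ _ _.
case: f => [[i []] hb]; rewrite inE /opencost /= => iS.
  by rewrite mulr_ge0 //; apply: sumr_ge0 => x _; apply: c_ge0.
have clients_travel : (n i)%:R * lmin c i <= \sum_(x | client_loc x == i) travel x.
  rewrite mulr_natl -card_clients_at -sumr_const.
  rewrite (eq_bigl (fun x => client_loc x == i)) => [|x]; last by rewrite inE.
  apply: ler_sum => x /eqP xi; rewrite /travel xi; apply: lmin_le.
  by apply: contraNneq iS => <-; apply: g_open.
rewrite (eq_bigl (fun x => client_loc x == i)) => [|x]; last by rewrite /at_first andbT.
rewrite -!mulrA; case: ifP => small_i; rewrite ler_wpM2l //.
apply: le_trans clients_travel; rewrite ler_wpM2r ?c_ge0 // ler_nat.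
by move: small_i; rewrite /small => /negbT; rewrite -ltnNge => /ltnW.
Qed.

(* Summing over the open facilities: every client is counted once, at the
   first copy of its own location. *)
Lemma opening_cost_le : \sum_(f in cap_open) opencost delta c f <= delta * I2_cost c g.
Proof.
case: c_metric => c_ge0 _ _ _.
apply: le_trans (_ : _ <= \sum_(f : capfac) delta * \sum_(x | at_first f x) travel x) _.
  rewrite [leRHS](bigID (mem cap_open)) /= -[leLHS]addr0; apply: lerD.
    by apply: ler_sum => f; apply: opencost_le.
  by apply: sumr_ge0 => f _; rewrite mulr_ge0 //; apply: sumr_ge0 => x _; apply: c_ge0.
rewrite -mulr_sumr /I2_cost ler_wpM2l // (exchange_big_dep xpredT) //=.
apply: ler_sum => x _; rewrite (big_pred1 (first_fac (client_loc x))) // => f.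
case: f => [[i b] hb]; rewrite /at_first /= -val_eqE /= xpair_eqE eq_sym.
by case: b {hb}; rewrite ?andbF ?andbT.
Qed.

(* A unit at a closed point is served where it stands; a unit at an open
   point j travels from j to the location of its partner, exactly the
   distance that partner travels to j.  Partners are distinct. *)
Lemma assignment_cost_le :
  \sum_(u : dunit) c (unit_loc u) (capfac_loc (cap_assign u)) <= I2_cost c g.
Proof.
case: c_metric => c_ge0 c_zero c_sym _.
have unit_cost u : c (unit_loc u) (capfac_loc (cap_assign u)) =
                   if unit_loc u \in S then travel (partner u) else 0.
  rewrite /cap_assign /travel; case: ifP => uS /=.
    by rewrite /capfac_loc /= partner_served // c_sym.
  by apply/eqP; rewrite c_zero.
rewrite (eq_bigr _ (fun u _ => unit_cost u)) -big_mkcond /=.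
rewrite (eq_bigl (mem [set u : dunit | unit_loc u \in S])) => [|u]; last by rewrite !inE.
rewrite -(big_imset travel partner_inj) /I2_cost.
rewrite [leRHS](bigID (mem (partner @: [set u : dunit | unit_loc u \in S]))) /=.
by rewrite lerDl sumr_ge0.
Qed.

Lemma cap_cost_le : Icap_cost delta c cap_open cap_assign <= (1 + delta) * I2_cost c g.
Proof.
rewrite /Icap_cost mulrDl mul1r [leRHS]addrC.
by apply: lerD; [apply: opening_cost_le | apply: assignment_cost_le].
Qed.

End Construction.

Unset Implicit Arguments. Set Strict Implicit.

Theorem lemma4p1 (R : realFieldType) (F : finType) (c : F -> F -> R)
    (n : F -> nat) (L : nat) (delta : R)
    (S2 : {set F}) (sigma2 : client n -> F) :
  is_metric c ->
  (2 <= #|F|)%N ->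
  (forall i, (1 <= n i)%N) ->
  (1 <= L)%N ->
  0 < delta ->
  I2_optimal L c S2 sigma2 ->
  exists (T : {set capfac n L}) (tau : dunit n L -> capfac n L),
    Icap_feasible T tau /\
    Icap_cost delta c T tau <= (1 + 2 * delta) * I2_cost c sigma2.
Proof.
move=> c_metric _ n_pos _ delta_pos [feasible2 _].
have [g [[g_open g_lb] cost_g g_prio]] := normalize c_metric feasible2.
have delta_ge0 : 0 <= delta := ltW delta_pos.
have cost2_ge0 : 0 <= I2_cost c sigma2 by apply: sumr_ge0 => x _; case: c_metric.
exists (cap_open n L S2), (cap_assign n_pos S2 g); split.
  split=> [u | f]; first exact: cap_assign_open.
  exact: cap_assign_capacity.
apply: le_trans (cap_cost_le n_pos g_lb delta_ge0 c_metric g_open) _.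
apply: le_trans (_ : _ <= (1 + delta) * I2_cost c sigma2) _.
  by rewrite ler_wpM2l // addr_ge0.
by rewrite ler_wpM2r // lerD2l ler_peMl // ler1n.
Qed.
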